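(* Let $P=(X,\prec)$ be a finite twin-free interval order containing no induced subposet isomorphic to any of $\mathbf{4}+\mathbf{1}$, $\mathbf{3}+\mathbf{1}+\mathbf{1}$, $Z$, $D$, $Y$, or the dual of $Y$, and let $\mathcal I=\{I(z)=[L(z),R(z)]:z\in X\}$ be a closed interval representation of $P$ such that (1) no interval strictly contains two other intervals, (2) no interval is strictly contained in two other intervals, and (3) whenever $I(u)\subsetneq I(v)$ there are unique $x,y\in X$ with $x$ peeking into $vu$ from the left and $y$ peeking into $vu$ from the right. Fix a proper inclusion $I(u)\subsetneq I(v)$ with left peeker $x$ and right peeker $y$, and replace $I(x)$ by $[L(x),L(v)]$ and $I(y)$ by $[R(v),R(y)]$, leaving all other intervals unchanged. Then the resulting set of closed intervals is again a closed interval representation of $P$, it again satisfies (1), (2), (3), and it has the same proper inclusions as $\mathcal I$ (that is, for all $a,b\in X$ the new interval of $a$ is properly contained in the new interval of $b$ if and only if $I(a)\subsetneq I(b)$).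
   Context: Posets are strict (irreflexive) partial orders; twins are points with exactly the same comparabilities; twin-free means no two distinct twins. A closed interval representation of $P$ assigns a closed real interval $[L(x),R(x)]$ to each $x$ with $x\prec y$ iff $R(x)<L(y)$; $P$ is an interval order if one exists. $I(u)$ is strictly contained in $I(v)$ if $I(u)\subset I(v)$ and they do not have identical endpoints. For $I(u)\subsetneq I(v)$: $x$ peeks into $vu$ if $I(x)$ meets $I(v)$ but not $I(u)$; from the left if moreover $R(x)\le L(u)$; from the right if moreover $R(u)\le L(x)$. Forbidden posets (unlisted, non-transitively-implied pairs incomparable): $\mathbf{4}+\mathbf{1}$: $a\prec b\prec c\prec d$ plus isolated $x$. $\mathbf{3}+\mathbf{1}+\mathbf{1}$: $a\prec b\prec c$ plus isolated $x,y$. $Z$: $a,b,c,d,x,y$ with $a\prec b\prec c\prec d$, $x\prec d$, $a\prec y$. $D$: $a,b,c,d,x$ with $a\prec b\prec d$, $a\prec c\prec d$. $Y$: $a,b,c,d,x$ with $a\prec d\prec b$, $a\prec d\prec c$. The dual reverses all comparabilities. *)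

From HB Require Import structures.
From mathcomp Require Import all_boot all_order all_algebra.
From mathcomp Require Import reals.
Set Implicit Arguments. Unset Strict Implicit. Unset Printing Implicit Defensive.
Import Order.TTheory GRing.Theory Num.Theory.
Local Open Scope ring_scope.

Definition strict_poset (T : finType) (lt : rel T) : Prop :=
  irreflexive lt /\ transitive lt.

Definition twins (T : finType) (lt : rel T) (a b : T) : Prop :=
  forall z, (lt z a = lt z b) /\ (lt a z = lt b z).

Definition twin_free (T : finType) (lt : rel T) : Prop :=
  forall a b, twins lt a b -> a = b.

(** A small poset on 'I_k given by the list of ALL its comparable pairs
    (already transitively closed). *)
Definition rel_of (k : nat) (s : seq (nat * nat)) : rel 'I_k :=
  fun i j => (nat_of_ord i, nat_of_ord j) \in s.

Definition dual_rel (k : nat) (r : rel 'I_k) : rel 'I_k := fun i j => r j i.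

Definition contains_induced (T : finType) (lt : rel T) (k : nat) (r : rel 'I_k)
  : Prop :=
  exists f : 'I_k -> T, injective f /\ forall i j, lt (f i) (f j) = r i j.

(** 4+1 : a=0<b=1<c=2<d=3, x=4 isolated. *)
Definition four_plus_one : rel 'I_5 :=
  @rel_of 5 [:: (0,1); (0,2); (0,3); (1,2); (1,3); (2,3)]%N.
(** 3+1+1 : a=0<b=1<c=2, x=3, y=4 isolated. *)
Definition three_one_one : rel 'I_5 :=
  @rel_of 5 [:: (0,1); (0,2); (1,2)]%N.
(** Z : a=0<b=1<c=2<d=3, x=4<d, a<y=5. *)
Definition posetZ : rel 'I_6 :=
  @rel_of 6 [:: (0,1); (0,2); (0,3); (1,2); (1,3); (2,3); (4,3); (0,5)]%N.
(** D : a=0<b=1<d=3, a<c=2<d, x=4 isolated. *)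
Definition posetD : rel 'I_5 :=
  @rel_of 5 [:: (0,1); (0,2); (0,3); (1,3); (2,3)]%N.
(** Y : a=0<d=3<b=1, a<d<c=2, x=4 isolated. *)
Definition posetY : rel 'I_5 :=
  @rel_of 5 [:: (0,3); (3,1); (3,2); (0,1); (0,2)]%N.

Definition forbidden_free (T : finType) (lt : rel T) : Prop :=
  ~ contains_induced lt four_plus_one /\
  ~ contains_induced lt three_one_one /\
  ~ contains_induced lt posetZ /\
  ~ contains_induced lt posetD /\
  ~ contains_induced lt posetY /\
  ~ contains_induced lt (dual_rel posetY).

Section Intervals.
Variables (R : realType) (T : finType).

Definition closed_rep (lt : rel T) (L Rt : T -> R) : Prop :=
  (forall z, L z <= Rt z) /\ (forall a b, lt a b = (Rt a < L b)).

Definition interval_order (lt : rel T) : Prop :=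
  exists L Rt : T -> R, closed_rep lt L Rt.

Definition scont (L Rt : T -> R) (u v : T) : Prop :=
  (L v <= L u /\ Rt u <= Rt v) /\ ~ (L u = L v /\ Rt u = Rt v).

Definition meets (L Rt : T -> R) (a b : T) : Prop :=
  L a <= Rt b /\ L b <= Rt a.

Definition peeks (L Rt : T -> R) (v u x : T) : Prop :=
  meets L Rt x v /\ ~ meets L Rt x u.
Definition peeks_left (L Rt : T -> R) (v u x : T) : Prop :=
  peeks L Rt v u x /\ Rt x <= L u.
Definition peeks_right (L Rt : T -> R) (v u x : T) : Prop :=
  peeks L Rt v u x /\ Rt u <= L x.

Definition cond1 (L Rt : T -> R) : Prop :=
  ~ exists v a b, a <> b /\ scont L Rt a v /\ scont L Rt b v.
Definition cond2 (L Rt : T -> R) : Prop :=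
  ~ exists u a b, a <> b /\ scont L Rt u a /\ scont L Rt u b.
Definition cond3 (L Rt : T -> R) : Prop :=
  forall u v, scont L Rt u v ->
    (exists! x, peeks_left L Rt v u x) /\ (exists! y, peeks_right L Rt v u y).

Definition good_rep (L Rt : T -> R) : Prop :=
  cond1 L Rt /\ cond2 L Rt /\ cond3 L Rt.

Definition newL (L Rt : T -> R) (v y : T) : T -> R :=
  fun z => if z == y then Rt v else L z.
Definition newR (L Rt : T -> R) (v x : T) : T -> R :=
  fun z => if z == x then L v else Rt z.

End Intervals.

(** By (3), the left peeker x is the only interval that meets I(v) and ends
    before I(u) begins, and dually for y.  Conditions (1) and (2) moreover forbid
    any interval from starting in ]L v, R x] or ending in [L y, R v[.  Hence
    shortening I(x) to end at L v and I(y) to start at R v moves each endpoint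
    across a gap containing no other endpoint of its kind: the order of left
    endpoints, the order of right endpoints and every comparison R a < L b are
    unchanged.  The first two orders determine the proper inclusions, the last
    one the poset, and meeting and peeking are expressed through the poset, so
    (1)-(3) carry over. *)
From HB Require Import structures.
From mathcomp Require Import all_boot all_order all_algebra.
From mathcomp Require Import reals.
From mathcomp Require Import lra.
Set Implicit Arguments. Unset Strict Implicit. Unset Printing Implicit Defensive.
Import Order.TTheory GRing.Theory Num.Theory.
Local Open Scope ring_scope.

Lemma le_move_in_gap (T : eqType) (R : realDomainType) (f g : T -> R) x lo hi :
  lo <= g x <= hi -> lo <= f x <= hi ->
  (forall z, z != x -> g z = f z) ->
  (forall z, z != x -> f z < lo \/ hi < f z) ->
  forall a b, (g a <= g b) = (f a <= f b).
Proof.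
move=> /andP[g1 g2] /andP[f1 f2] gf gap a b.
have [->|ax] := eqVneq a x; have [->|bx] := eqVneq b x; rewrite ?lexx //.
- by rewrite (gf b bx); case: (gap b bx) => h; apply/idP/idP; lra.
- by rewrite (gf a ax); case: (gap a ax) => h; apply/idP/idP; lra.
- by rewrite !gf.
Qed.

Section Inclusions.
Variables (R : realType) (T : finType).
Implicit Types (L Rt : T -> R) (a b v : T).

Lemma scont_intro L Rt a b :
  L b <= L a -> Rt a <= Rt b -> L b < L a \/ Rt a < Rt b -> scont L Rt a b.
Proof.
by move=> h1 h2 h3; split=> // -[e1 e2]; rewrite e1 e2 !ltxx in h3; case: h3.
Qed.

Lemma scont_le_eq L Rt L' R' :
  (forall a b, (L' a <= L' b) = (L a <= L b)) ->
  (forall a b, (R' a <= R' b) = (Rt a <= Rt b)) ->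
  forall a b, scont L' R' a b <-> scont L Rt a b.
Proof.
move=> hL hR a b.
have eqL c d : (L' c == L' d) = (L c == L d) by rewrite !eq_le !hL.
have eqR c d : (R' c == R' d) = (Rt c == Rt d) by rewrite !eq_le !hR.
rewrite /scont !hL !hR; split=> -[h ne]; split=> // -[/eqP e1 /eqP e2]; apply: ne.
- by split; apply/eqP; rewrite ?eqL ?eqR.
- by split; apply/eqP; rewrite -?eqL -?eqR.
Qed.

Lemma cond1_eq L Rt a b v :
  cond1 L Rt -> scont L Rt a v -> scont L Rt b v -> a = b.
Proof.
move=> c1 av bv; have [//|/eqP ab] := eqVneq a b.
by exfalso; apply: c1; exists v, a, b.
Qed.

Lemma cond2_eq L Rt a b v :
  cond2 L Rt -> scont L Rt v a -> scont L Rt v b -> a = b.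
Proof.
move=> c2 va vb; have [//|/eqP ab] := eqVneq a b.
by exfalso; apply: c2; exists v, a, b.
Qed.

End Inclusions.

Section Representation.
Variables (R : realType) (T : finType) (lt : rel T) (L Rt : T -> R).
Hypothesis rep : closed_rep lt L Rt.

Lemma meets_rep a b : meets L Rt a b <-> ~~ lt b a /\ ~~ lt a b.
Proof. by case: rep => _ h; rewrite /meets !h -!leNgt. Qed.

Lemma peeks_left_rep v u z :
  peeks_left L Rt v u z <-> peeks L Rt v u z /\ lt z u.
Proof.
case: rep => hLR h; rewrite /peeks_left h; split=> -[[m nm] hz]; split=> //.
- rewrite ltNge; apply/negP => h2; apply: nm.
  by have := hLR z; have := hLR u; split; lra.
- exact: ltW.
Qed.

Lemma peeks_right_rep v u z :
  peeks_right L Rt v u z <-> peeks L Rt v u z /\ lt u z.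
Proof.
case: rep => hLR h; rewrite /peeks_right h; split=> -[[m nm] hz]; split=> //.
- rewrite ltNge; apply/negP => h2; apply: nm.
  by have := hLR z; have := hLR u; split; lra.
- exact: ltW.
Qed.

End Representation.

Lemma good_rep_transfer (R : realType) (T : finType) (lt : rel T)
    (L Rt L' R' : T -> R) :
  closed_rep lt L Rt -> closed_rep lt L' R' ->
  (forall a b, scont L' R' a b <-> scont L Rt a b) ->
  good_rep L Rt -> good_rep L' R'.
Proof.
move=> rep rep' hsc [c1 [c2 c3]].
have hpeeks v u z : peeks L' R' v u z <-> peeks L Rt v u z.
  by rewrite /peeks !(meets_rep rep') !(meets_rep rep).
have hpl v u z : peeks_left L' R' v u z <-> peeks_left L Rt v u z.
  by rewrite (peeks_left_rep rep') (peeks_left_rep rep) hpeeks.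
have hpr v u z : peeks_right L' R' v u z <-> peeks_right L Rt v u z.
  by rewrite (peeks_right_rep rep') (peeks_right_rep rep) hpeeks.
split; [|split].
- by case=> w [a [b [ab [h1 h2]]]]; apply: c1; exists w, a, b; rewrite -!hsc.
- by case=> w [a [b [ab [h1 h2]]]]; apply: c2; exists w, a, b; rewrite -!hsc.
- move=> a b /hsc /c3 [[x0 [px0 ux0]] [y0 [py0 uy0]]]; split.
  + by exists x0; split=> [|z /hpl]; [apply/hpl | apply: ux0].
  + by exists y0; split=> [|z /hpr]; [apply/hpr | apply: uy0].
Qed.

Section Modification.
Variables (R : realType) (T : finType) (lt : rel T) (L Rt : T -> R) (u v x y : T).
Hypotheses (rep : closed_rep lt L Rt) (good : good_rep L Rt).
Hypotheses (uv : scont L Rt u v) (xl : peeks_left L Rt v u x)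
  (yr : peeks_right L Rt v u y).

Let hLR := rep.1.

Lemma left_peeker_before : Rt x < L u.
Proof. by rewrite -rep.2; case/(peeks_left_rep rep): xl. Qed.

Lemma right_peeker_after : Rt u < L y.
Proof. by rewrite -rep.2; case/(peeks_right_rep rep): yr. Qed.

Lemma left_peeker_unique a :
  L a <= Rt v -> L v <= Rt a -> Rt a < L u -> a = x.
Proof.
move=> h1 h2 h3; have [[x0 [_ ux0]] _] := good.2.2 u v uv.
have pa : peeks_left L Rt v u a by split; [split=> // -[_ ?]; lra | lra].
by rewrite -(ux0 a pa); exact: ux0.
Qed.

Lemma right_peeker_unique a :
  L a <= Rt v -> L v <= Rt a -> Rt u < L a -> a = y.
Proof.
move=> h1 h2 h3; have [_ [y0 [_ uy0]]] := good.2.2 u v uv.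
have pa : peeks_right L Rt v u a by split; [split=> // -[? _]; lra | lra].
by rewrite -(uy0 a pa); exact: uy0.
Qed.

Lemma left_peeker_starts_before : L x <= L v.
Proof.
have [[_ Ruv] _] := uv; have Lu := hLR u; have Rxu := left_peeker_before.
rewrite leNgt; apply/negP => Lvx.
have xv : scont L Rt x v by apply: scont_intro; [exact: ltW | lra | left].
by have xu := cond1_eq good.1 xv uv; rewrite xu in Rxu; lra.
Qed.

Lemma right_peeker_ends_after : Rt v <= Rt y.
Proof.
have [[Lvu _] _] := uv; have Lu := hLR u; have Ruy := right_peeker_after.
rewrite leNgt; apply/negP => Ryv.
have yv : scont L Rt y v by apply: scont_intro; [lra | exact: ltW | right].
by have yu := cond1_eq good.1 yv uv; rewrite yu in Ruy; lra.
Qed.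

Lemma left_peeker_end_lt a : L v < L a -> Rt x < L a.
Proof.
move=> Lva; have [[_ Ruv] _] := uv; have Rxu := left_peeker_before.
rewrite ltNge; apply/negP => Lax; have La := hLR a.
have [Rav|Rva] := leP (Rt a) (Rt v).
- have av : scont L Rt a v by apply: scont_intro; [exact: ltW | | left].
  by have au := cond1_eq good.1 av uv; rewrite au in Lax; lra.
- have ua : scont L Rt u a by apply: scont_intro; [lra | lra | right; lra].
  by have va := cond2_eq good.2.1 uv ua; rewrite va in Lva; lra.
Qed.

Lemma right_peeker_start_gt a : Rt a < Rt v -> Rt a < L y.
Proof.
move=> Rav; have [[Lvu _] _] := uv; have Ruy := right_peeker_after.
rewrite ltNge; apply/negP => Lya; have La := hLR a.
have [Lva|Lav] := leP (L v) (L a).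
- have av : scont L Rt a v by apply: scont_intro; [| exact: ltW | right].
  by have au := cond1_eq good.1 av uv; rewrite au in Lya; lra.
- have ua : scont L Rt u a by apply: scont_intro; [lra | lra | left; lra].
  by have va := cond2_eq good.2.1 uv ua; rewrite va in Lav; lra.
Qed.

Lemma right_ends_off_left_peek a : a != x -> Rt a < L v \/ Rt x < Rt a.
Proof.
move=> ax; have [[_ Ruv] _] := uv; have La := hLR a; have Lu := hLR u.
have Rxu := left_peeker_before.
have [Rav|Lva] := ltP (Rt a) (L v); [by left | right].
have [Rva|Lav] := ltP (Rt v) (L a); first lra.
have [Rau|Lua] := ltP (Rt a) (L u); last lra.
by rewrite (left_peeker_unique Lav Lva Rau) eqxx in ax.
Qed.

Lemma left_ends_off_right_peek a : a != y -> L a < L y \/ Rt v < L a.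
Proof.
move=> ay; have [[Lvu _] _] := uv; have La := hLR a; have Lu := hLR u.
have Ruy := right_peeker_after.
have [Rav|Lva] := ltP (Rt a) (L v); [left; lra |].
have [Rva|Lav] := ltP (Rt v) (L a); [by right |].
have [Lau|Rua] := leP (L a) (Rt u); [left; lra |].
by rewrite (right_peeker_unique Lav Lva Rua) eqxx in ay.
Qed.

Lemma newrep_closed : closed_rep lt (newL L Rt v y) (newR L Rt v x).
Proof.
have [[_ Ruv] _] := uv.
have [[[_ Lvx] _] _] := xl; have [[[Lyv _] _] _] := yr.
have Lu := hLR u; have Rxu := left_peeker_before; have Ruy := right_peeker_after.
have yx : y != x by apply/eqP => yx; have Lx := hLR x; rewrite yx in Ruy; lra.
rewrite /newL /newR; split=> [z | a b].
- have [-> | _] := eqVneq z y.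
    by rewrite (negbTE yx) right_peeker_ends_after.
  by have [-> | _] := eqVneq z x; [exact: left_peeker_starts_before | exact: hLR].
- rewrite rep.2; have [-> | _] := eqVneq a x; have [-> | _] := eqVneq b y => //.
  + by apply/idP/idP; lra.
  + by apply/idP/idP => [h | /left_peeker_end_lt //]; lra.
  + by apply/idP/idP => [h | /right_peeker_start_gt //]; lra.
Qed.

Lemma newrep_scont a b :
  scont (newL L Rt v y) (newR L Rt v x) a b <-> scont L Rt a b.
Proof.
have [[[_ Lvx] _] _] := xl; have [[[Lyv _] _] _] := yr.
apply: scont_le_eq => {a b}.
- apply: (@le_move_in_gap _ _ _ _ y (L y) (Rt v)) => [||z zy|].
  + by rewrite /newL eqxx Lyv lexx.
  + by rewrite lexx Lyv.
  + by rewrite /newL (negbTE zy).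
  + exact: left_ends_off_right_peek.
- apply: (@le_move_in_gap _ _ _ _ x (L v) (Rt x)) => [||z zx|].
  + by rewrite /newR eqxx Lvx lexx.
  + by rewrite lexx Lvx.
  + by rewrite /newR (negbTE zx).
  + exact: right_ends_off_left_peek.
Qed.

End Modification.

Theorem proposition14 (R : realType) (T : finType) (lt : rel T)
  (L Rt : T -> R) (u v x y : T) :
  strict_poset lt ->
  twin_free lt ->
  interval_order R lt ->
  forbidden_free lt ->
  closed_rep lt L Rt ->
  good_rep L Rt ->
  scont L Rt u v ->
  peeks_left L Rt v u x ->
  peeks_right L Rt v u y ->
  let L' := newL L Rt v y in
  let R' := newR L Rt v x in
  closed_rep lt L' R' /\ good_rep L' R' /\
  (forall a b, scont L' R' a b <-> scont L Rt a b).
Proof.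
move=> _ _ _ _ rep good uv xl yr L' R'.
have rep' := newrep_closed rep good uv xl yr.
have scont' := newrep_scont rep good uv xl yr.
split; first exact: rep'.
split; last exact: scont'.
exact: good_rep_transfer rep rep' scont' good.
Qed.
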